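(* Let $D$ be a strong nonseparable digraph and let $(D_0,D_1,\ldots,D_k)$ be an ear decomposition of $D$. Let $i\in\{0,\ldots,k-1\}$ and let $P_i=(x_0,x_1,\ldots,x_{r-1},x_r)$ be the ear of $D_i$ in $D$ (so $D_{i+1}=D_i\cup P_i$), with $l(P_i)\geq 2$. If $D_i$ has a kernel $N$ and one of the following holds: (1) $x_0,x_r\in N$ and $l(P_i)$ is even; (2) $x_0\in N$, $x_r\notin N$ and $l(P_i)$ is odd; (3) $x_0\notin N$ and $x_r\in N$; (4) $x_0,x_r\notin N$; then $D_{i+1}$ has a kernel.
   Context: All digraphs are finite, without loops or multiple arcs. Paths and cycles are directed; the length $l(P)$ of a path $P$ is its number of arcs. A digraph is strong if for every ordered pair of vertices $x,y$ there is a directed path from $x$ to $y$; it is nonseparable if its underlying undirected graph is nonseparable (has no cut vertex). For a subdigraph $H$ of $D$, an ear of $H$ in $D$ is a directed path $(x_0,\ldots,x_r)$ in $D$ whose end vertices lie in $H$ and whose internal vertices do not lie in $H$. An ear decomposition of a nonseparable strong digraph $D$ is a sequence $(D_0,\ldots,D_k)$ of nonseparable strong subdigraphs of $D$ such that $D_0$ is a directed cycle, $D_{j+1}=D_j\cup P_j$ with $P_j$ an ear of $D_j$ in $D$ for each $j\in\{0,\ldots,k-1\}$, and $D_k=D$. A kernel of a digraph is a set $N$ of vertices that is independent (no arc between two of its vertices) and absorbent (every vertex not in $N$ has an out-neighbour in $N$). *)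

From mathcomp Require Import all_boot.
Set Implicit Arguments. Unset Strict Implicit. Unset Printing Implicit Defensive.

(* A digraph D is given by a finite vertex type T and an arc relation E
   (loopless).  A subdigraph is a pair (vertex set, arc set). *)
Definition subdg (T : finType) := ({set T} * {set (T * T)})%type.

Section Digraphs.
Variable T : finType.

Definition full_dg (E : rel T) : subdg T := (setT, [set a | E a.1 a.2]).

Definition is_subdigraph (E : rel T) (H : subdg T) : Prop :=
  H.1 \subset setT /\
  forall a, a \in H.2 -> [/\ E a.1 a.2, a.1 \in H.1 & a.2 \in H.1].

Definition arel (H : subdg T) : rel T := fun x y => (x, y) \in H.2.

Definition is_dpath (r : rel T) (p : seq T) : bool :=
  if p is x :: q then uniq p && path r x q else false.

Definition plen (p : seq T) : nat := (size p).-1.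

Definition arcs_of (p : seq T) : {set T * T} :=
  [set a | a \in zip p (behead p)].

Definition verts_of (p : seq T) : {set T} := [set x | x \in p].

(* internal vertices x_1 .. x_{r-1} *)
Definition internal (p : seq T) : seq T :=
  if p is x :: q then behead (belast x q) else [::].

Definition strong (H : subdg T) : Prop :=
  forall x y, x \in H.1 -> y \in H.1 ->
    exists p, [/\ is_dpath (arel H) p, head x p = x, last x p = y
                 & all (fun z => z \in H.1) p].

Definition uconnected (V : {set T}) (A : {set T * T}) : Prop :=
  forall x y, x \in V -> y \in V ->
    connect (fun u v => [&& u \in V, v \in V & ((u, v) \in A) || ((v, u) \in A)]) x y.

Definition nonseparable (H : subdg T) : Prop :=
  uconnected H.1 H.2 /\ forall v, v \in H.1 -> uconnected (H.1 :\ v) H.2.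

Definition is_dcycle (H : subdg T) : Prop :=
  exists c : seq T, [/\ 2 <= size c, uniq c,
     H.1 = [set x | x \in c] & H.2 = [set a | a \in zip c (rot 1 c)]].

Definition is_ear (E : rel T) (H : subdg T) (p : seq T) : Prop :=
  if p is x :: q then
    [/\ is_dpath E p, x \in H.1, last x q \in H.1
      & all (fun z => z \notin H.1) (internal p)]
  else False.

Definition add_ear (H : subdg T) (p : seq T) : subdg T :=
  (H.1 :|: verts_of p, H.2 :|: arcs_of p).

Definition ear_decomposition (E : rel T) (k : nat)
    (Ds : nat -> subdg T) (Ps : nat -> seq T) : Prop :=
  [/\ forall j, j <= k ->
        [/\ is_subdigraph E (Ds j), strong (Ds j) & nonseparable (Ds j)],
      is_dcycle (Ds 0),
      forall j, j < k -> is_ear E (Ds j) (Ps j) /\ Ds j.+1 = add_ear (Ds j) (Ps j)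
    & Ds k = full_dg E].

Definition is_kernel (H : subdg T) (N : {set T}) : Prop :=
  [/\ N \subset H.1,
      forall u v, u \in N -> v \in N -> (u, v) \notin H.2
    & forall u, u \in H.1 -> u \notin N -> exists2 v, v \in N & (u, v) \in H.2].

End Digraphs.

From mathcomp Require Import all_boot.

Set Implicit Arguments.
Unset Strict Implicit.
Unset Printing Implicit Defensive.

(* Extend the kernel N of D_i backwards along the ear, starting from x_r.  An
   internal vertex has its successor as only out-neighbour in D_{i+1}, so it
   must join the kernel exactly when its successor does not; this alternating
   choice is consistent with N at x_r.  The only arc that can then join two
   kernel vertices is x_0 x_1, and x_1 is in the new kernel iff l(P) - 1 is
   odd and x_r is not in N or l(P) - 1 is even and x_r is in N: the four cases
   of the theorem are exactly those where x_0 and x_1 are not both chosen. *)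

Lemma mem_zip (S U : eqType) (s : seq S) (t : seq U) a :
  a \in zip s t -> (a.1 \in s) && (a.2 \in t).
Proof.
elim: s t => [|x s IH] [|y t] //=; rewrite in_cons => /predU1P[-> | /IH].
  by rewrite /= eqxx mem_head.
by case/andP=> -> a2; rewrite in_cons a2 !orbT.
Qed.

Section EarKernel.
Variable T : finType.
Implicit Types (H : subdg T) (N : {set T}) (u v x y : T) (p q : seq T).

Lemma kernel_add_arc H N a :
  ~~ ((a.1 \in N) && (a.2 \in N)) -> is_kernel H N -> is_kernel (H.1, a |: H.2) N.
Proof.
move=> aN [NV Nind Nabs]; split=> //= [u v uN vN | u uV uN].
  by rewrite in_setU1 negb_or Nind // andbT; apply: contra aN => /eqP <-; rewrite uN.
by have [v vN uvA] := Nabs u uV uN; exists v; rewrite // in_setU1 uvA orbT.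
Qed.

Lemma kernel_add_pendant H N u v :
  H.2 \subset setX H.1 H.1 -> u \notin H.1 -> v \in H.1 -> is_kernel H N ->
  is_kernel (u |: H.1, (u, v) |: H.2) (if v \in N then N else u |: N).
Proof.
move=> HA uV vV [NV Nind Nabs].
have uN : u \notin N := contra (subsetP NV u) uV.
have uA w : ((u, w) \notin H.2) && ((w, u) \notin H.2).
  by rewrite -negb_or; apply: contra uV => /orP[] /(subsetP HA); rewrite in_setX => /andP[].
case vN: (v \in N); split=> //=.
- exact: subset_trans NV (subsetU1 _ _).
- move=> a b aN bN; rewrite in_setU1 negb_or Nind // andbT.
  by apply: contraNneq uN => -[<- _].
- move=> w /setU1P[-> _ | wV wN]; first by exists v; rewrite // setU11.
  by have [z zN wzA] := Nabs w wV wN; exists z; rewrite // setU1r.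
- exact: setUS.
- move=> a b /setU1P[-> | aN] /setU1P[-> | bN]; rewrite in_setU1 negb_or.
  + by case/andP: (uA u) => -> _; rewrite andbT; apply: contraNneq uV => -[->].
  + by case/andP: (uA b) => -> _; rewrite andbT; apply: contraFneq vN => -[<-].
  + by case/andP: (uA a) => _ ->; rewrite andbT; apply: contraNneq uV => -[_ ->].
  + by rewrite Nind // andbT; apply: contraFneq vN => -[_ <-].
- move=> w /setU1P[-> | wV]; first by rewrite setU11.
  rewrite in_setU1 negb_or => /andP[_ wN].
  by have [z zN wzA] := Nabs w wV wN; exists z; rewrite ?setU1r.
Qed.

Lemma verts_of_cons x p : verts_of (x :: p) = x |: verts_of p.
Proof. by apply/setP => z; rewrite !inE. Qed.

Lemma arcs_of_cons x y p : arcs_of (x :: y :: p) = (x, y) |: arcs_of (y :: p).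
Proof. by apply/setP => a; rewrite !inE. Qed.

Lemma add_ear1 H x : x \in H.1 -> add_ear H [:: x] = H.
Proof.
case: H => V A /= xV; rewrite /add_ear /=; congr pair; apply/setP => z.
  by rewrite !inE; case: eqP => [-> | _]; rewrite ?xV ?orbF.
by rewrite !inE /= in_nil orbF.
Qed.

Lemma add_ear_cons H x y p :
  add_ear H (x :: y :: p) = (x |: (add_ear H (y :: p)).1, (x, y) |: (add_ear H (y :: p)).2).
Proof. by rewrite /add_ear /= verts_of_cons arcs_of_cons; congr pair; apply: setUCA. Qed.

Lemma add_ear_closed H p :
  H.2 \subset setX H.1 H.1 -> (add_ear H p).2 \subset setX (add_ear H p).1 (add_ear H p).1.
Proof.
move=> HA; apply/subsetP => -[a b] /setUP[/(subsetP HA) | ].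
  by rewrite !in_setX !in_setU => /andP[-> ->].
rewrite inE => /mem_zip /andP[ap /mem_behead bp].
by rewrite in_setX !in_setU !inE ap bp !orbT.
Qed.

Fixpoint pendant_kernel N x q : {set T} :=
  if q is y :: q' then
    let K := pendant_kernel N y q' in if y \in K then K else x |: K
  else N.

Definition pendant H x q : bool :=
  [&& uniq (x :: q), last x q \in H.1 & all (fun z => z \notin H.1) (belast x q)].

Lemma pendant_cons H x y q :
  pendant H x (y :: q) -> [/\ x \notin H.1, x \notin y :: q & pendant H y q].
Proof. by case/and3P=> /andP[xyq Uyq] lastV /andP[xV allq]; split=> //; apply/and3P. Qed.

Lemma pendant_kernel_notin N x q z :
  z \notin x :: q -> (z \in pendant_kernel N x q) = (z \in N).
Proof.
elim: q x => [|y q IH] x /=; rewrite in_cons negb_or => /andP[zx zq] //.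
by case: ifP => _; rewrite ?in_setU1 ?(negbTE zx) IH.
Qed.

Lemma pendant_kernel_head H N x q : N \subset H.1 -> pendant H x q ->
  (x \in pendant_kernel N x q) = (odd (size q) != (last x q \in N)).
Proof.
move=> NV; elim: q x => [|y q IH] x; first by case: (x \in N).
case/pendant_cons=> xV xyq /IH yK.
have xK : x \notin pendant_kernel N y q.
  by rewrite pendant_kernel_notin // (contra (subsetP NV x) xV).
by rewrite /= yK; case: (odd _); case: (last y q \in N); rewrite /= ?setU11 ?(negbTE xK).
Qed.

Lemma pendant_kernelP H N x q :
  H.2 \subset setX H.1 H.1 -> is_kernel H N -> pendant H x q ->
  is_kernel (add_ear H (x :: q)) (pendant_kernel N x q).
Proof.
move=> HA HN; elim: q x => [|y q IH] x.
  by case/and3P=> _ xV _; rewrite add_ear1.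
case/pendant_cons=> xV xyq Hy.
rewrite add_ear_cons; apply: kernel_add_pendant.
- exact: add_ear_closed.
- by rewrite /= in_setU verts_of_cons !inE negb_or xV.
- by rewrite /= in_setU verts_of_cons setU11 orbT.
- exact: IH.
Qed.

Lemma ear_kernel (E : rel T) H N x0 x1 q :
  H.2 \subset setX H.1 H.1 -> is_kernel H N -> is_ear E H (x0 :: x1 :: q) ->
  (x0 \in N -> odd (size q) = (last x1 q \in N)) ->
  is_kernel (add_ear H (x0 :: x1 :: q)) (pendant_kernel N x1 q).
Proof.
move=> HA HN [/andP[/= /andP[x0q Uq] _] x0V lastV inner] x0N.
have Hpend : pendant H x1 q by apply/and3P.
have [NV _ _] := HN.
rewrite add_ear_cons (setUidPr _); last by rewrite sub1set in_setU x0V.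
apply: kernel_add_arc (pendant_kernelP HA HN Hpend) => /=.
rewrite pendant_kernel_notin // (pendant_kernel_head NV Hpend).
by rewrite negb_and negbK; case: (boolP (x0 \in N)) => [/x0N -> | _]; rewrite ?eqxx ?orbT.
Qed.

End EarKernel.

Theorem mainTheorem11 (T : finType) (E : rel T) (Eirr : irreflexive E)
  (Dstrong : strong (full_dg E)) (Dnonsep : nonseparable (full_dg E))
  (k : nat) (Ds : nat -> subdg T) (Ps : nat -> seq T)
  (Hdec : ear_decomposition E k Ds Ps)
  (i : nat) (hi : i < k) (x0 : T) (mid : seq T) (xr : T)
  (HP : Ps i = x0 :: rcons mid xr)
  (Hlen : 2 <= plen (Ps i))
  (N : {set T}) (HN : is_kernel (Ds i) N)
  (Hcase : [\/ [/\ x0 \in N, xr \in N & ~~ odd (plen (Ps i))],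
               [/\ x0 \in N, xr \notin N & odd (plen (Ps i))],
               x0 \notin N /\ xr \in N
             | x0 \notin N /\ xr \notin N]) :
  exists N' : {set T}, is_kernel (Ds i.+1) N'.
Proof.
case: Hdec => Hdg _ Hears _.
have [[_ Hsub] _ _] := Hdg i (ltnW hi).
have [Hear ->] := Hears i hi.
have HA : (Ds i).2 \subset setX (Ds i).1 (Ds i).1.
  by apply/subsetP => -[u v] /Hsub[_ uV vV]; rewrite in_setX uV vV.
move: Hlen Hcase Hear; rewrite {}HP /plen; case: mid => [|x1 mid] //= _ Hcase Hear.
exists (pendant_kernel N x1 (rcons mid xr)).
apply: ear_kernel HA HN Hear _ => x0N; rewrite last_rcons.
by case: Hcase => [[_ -> /negPn] | [_ /negPf -> /negPf] | [] | []]; rewrite ?x0N.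
Qed.
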